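(* Let $G$ be a locally compact group, $O$ a neighborhood of the unit, $K\subseteq G$ compact, and $F\subseteq G$ a finite set with $K\subseteq FO$ and $|F|=(K:O)$. Then for every $S\subseteq F$, $(SO:O)=|S|$.
   Context: For $X\subseteq G$ and a neighborhood $O$ of the unit, $(X:O)$ denotes the minimal $n$ such that there is a set $F'\subseteq G$ with $|F'|=n$ and $X\subseteq F'O$, where $F'O=\{fo: f\in F', o\in O\}$. *)

From HB Require Import structures.
From mathcomp Require Import all_boot all_order all_algebra.
From mathcomp Require Import finmap.
From mathcomp Require Import all_classical all_reals all_analysis.

Set Implicit Arguments.
Unset Strict Implicit.
Unset Printing Implicit Defensive.

Local Open Scope classical_set_scope.


Definition topological_group (G : topologicalType)
  (mul : G -> G -> G) (inv : G -> G) (e : G) : Prop :=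
  [/\ associative mul, left_id e mul, left_inverse e inv mul,
      continuous (fun p : G * G => mul p.1 p.2) & continuous inv].

Definition locally_compact_space (G : topologicalType) : Prop :=
  locally_compact [set: G].

Definition setmul (G : Type) (mul : G -> G -> G) (A B : set G) : set G :=
  [set mul a b | a in A & b in B].

Definition covered_by (G : choiceType) (mul : G -> G -> G)
  (X O : set G) (n : nat) : Prop :=
  exists F' : {fset G}, (#|` F'|)%fset = n /\ X `<=` setmul mul [set` F'] O.

Lemma covnum_ex (G : choiceType) (mul : G -> G -> G) (X O : set G) :
  (exists n, covered_by mul X O n) ->
  exists n, (fun n => `[< covered_by mul X O n >]) n.
Proof. by move=> [n h]; exists n; apply/asboolP. Qed.

(* (X : O) = the minimal n such that X ⊆ F' O for some F' with |F'| = n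
   (set to 0 when no such n exists, which never happens in our uses). *)
Definition covnum (G : choiceType) (mul : G -> G -> G) (X O : set G) : nat :=
  match pselect (exists n, covered_by mul X O n) with
  | left h => ex_minn (covnum_ex h)
  | right _ => 0%N
  end.

From Pilot Require Import Defs.
From HB Require Import structures.
From mathcomp Require Import all_boot all_order all_algebra.
From mathcomp Require Import finmap.
From mathcomp Require Import all_classical all_reals all_analysis.

(* Trivially [S O] is covered by the [|S|]
   translates indexed by [S].  If fewer translates [F2 O] covered [S O], then
   replacing [S] by [F2] inside [F] would give a cover [((F \ S) ∪ F2) O] of
   [K] with fewer than [|F| = (K : O)] translates, contradicting minimality. *)

Local Open Scope classical_set_scope.

Section CoveringNumber.

Context {G : choiceType} {mul : G -> G -> G}.

Lemma covnum_le {X O : set G} {n : nat} :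
  Defs.covered_by mul X O n -> (covnum mul X O <= n)%N.
Proof.
move=> cov; rewrite /covnum; case: pselect => [ex|]; last by case; exists n.
by case: ex_minnP => m _; apply; apply/asboolP.
Qed.

Lemma covnum_covered {X O : set G} {n : nat} :
  Defs.covered_by mul X O n -> Defs.covered_by mul X O (covnum mul X O).
Proof.
move=> cov; rewrite /covnum; case: pselect => [ex|]; last by case; exists n.
by case: ex_minnP => m /asboolP.
Qed.

Lemma covered_by_fset {X O : set G} {F : {fset G}} :
  X `<=` setmul mul [set` F] O -> Defs.covered_by mul X O #|` F|%fset.
Proof. by exists F. Qed.

Lemma covnum_setmul_le (S : {fset G}) (O : set G) :
  (covnum mul (setmul mul [set` S] O) O <= #|` S|)%N.
Proof. exact/covnum_le/covered_by_fset. Qed.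

Lemma setmul_fsetD_exchange {F S F2 : {fset G}} {O : set G} :
  setmul mul [set` S] O `<=` setmul mul [set` F2] O ->
  setmul mul [set` F] O `<=` setmul mul [set` (F `\` S `|` F2)%fset] O.
Proof.
move=> SF2 _ [f Ff [y Oy <-]].
have [fS | fS] := boolP (f \in S).
  have [|g F2g [y' Oy' <-]] := SF2 (mul f y); first by exists f => //; exists y.
  by exists g; [rewrite /= in_fsetU F2g orbT | exists y'].
by exists f; [rewrite /= in_fsetU in_fsetD fS Ff | exists y].
Qed.

End CoveringNumber.

Lemma card_fsetD_fsetU_le {T : choiceType} (F S F2 : {fset T}) :
  (S `<=` F)%fset ->
  (#|` (F `\` S `|` F2)%fset| + #|` S| <= #|` F| + #|` F2|)%N.
Proof.
move=> SF; have [cardU _] := leq_card_fsetU (F `\` S)%fset F2.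
rewrite -[X in (_ <= X + _)%N](subnK (fsubset_leq_card SF)) addnAC leq_add2r.
by rewrite -(cardfsDS SF).
Qed.

Lemma covnum_setmul_sub_min_cover (G : choiceType) (mul : G -> G -> G)
    (X O : set G) (F S : {fset G}) :
  X `<=` setmul mul [set` F] O -> #|` F|%fset = covnum mul X O ->
  (S `<=` F)%fset -> covnum mul (setmul mul [set` S] O) O = #|` S|%fset.
Proof.
move=> XF minF SF; apply/eqP; rewrite eqn_leq covnum_setmul_le /= leqNgt.
apply/negP => small.
have [F2 [cardF2 SF2]] :=
  covnum_covered (covered_by_fset (@subset_refl _ (setmul mul [set` S] O))).
have XF3 := subset_trans XF (setmul_fsetD_exchange SF2).
have le_FF3 := covnum_le (covered_by_fset XF3); rewrite -minF in le_FF3.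
have := card_fsetD_fsetU_le F S F2 SF; rewrite cardF2 => cardF3.
suff : (#|` F| + #|` S| < #|` F| + #|` S|)%N by rewrite ltnn.
apply: leq_ltn_trans (leq_trans (leq_add le_FF3 (leqnn _)) cardF3) _.
by rewrite ltn_add2l.
Qed.

Theorem proposition6 (G : topologicalType) (mul : G -> G -> G) (inv : G -> G)
  (e : G) (O K : set G) (F : {fset G}) :
  topological_group mul inv e ->
  locally_compact_space G ->
  nbhs e O ->
  compact K ->
  K `<=` setmul mul [set` F] O ->
  (#|` F|)%fset = covnum mul K O ->
  forall S : {fset G}, (S `<=` F)%fset ->
    covnum mul (setmul mul [set` S] O) O = (#|` S|)%fset.
Proof.
move=> _ _ _ _ KF minF S SF.
exact: covnum_setmul_sub_min_cover KF minF SF.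
Qed.
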